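(* Every closure semilattice can be embedded into some closure space. That is, if $\mathbf S=(S,\vee_{\mathbf S},K_{\mathbf S})$ is a closure semilattice, then there exist a set $X$, a closure operation $K$ on $\mathcal P(X)$ and an injective map $\varphi:S\to\mathcal P(X)$ such that $\varphi(a\vee_{\mathbf S}b)=\varphi(a)\cup\varphi(b)$ and $\varphi(K_{\mathbf S}a)=K\varphi(a)$ for all $a,b\in S$.
   Context: A closure operation on a poset is a unary operation $K$ which is extensive ($x\le Kx$), idempotent ($KKx=Kx$) and isotone ($x\le y\Rightarrow Kx\le Ky$). A closure semilattice is a join semilattice endowed with a closure operation (with respect to the order induced by the join). A closure space is a set $X$ with a closure operation $K$ on $(\mathcal P(X),\subseteq)$, regarded as the structure $(\mathcal P(X),\cup,K)$. *)

From HB Require Import structures.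
From mathcomp Require Import all_boot all_order.
Set Implicit Arguments. Unset Strict Implicit. Unset Printing Implicit Defensive.
Import Order.TTheory.
Local Open Scope order_scope.

Definition closure_op_on (P : Type) (le : P -> P -> Prop) (K : P -> P) : Prop :=
  [/\ (forall x, le x (K x)),
      (forall x, K (K x) = K x)
    & (forall x y, le x y -> le (K x) (K y))].

(* Closure operation on a join semilattice, w.r.t. the order induced by join
   (in mathcomp, x <= y is equivalent to x `|` y = y). *)
Definition closure_op {d : Order.disp_t} (S : joinSemilatticeType d) (K : S -> S) : Prop :=
  closure_op_on (fun x y : S => x <= y) K.

Definition subset_of (X : Type) (A B : X -> Prop) : Prop := forall x, A x -> B x.

Definition union_of (X : Type) (A B : X -> Prop) : X -> Prop := fun x => A x \/ B x.

Definition closure_space_op (X : Type) (K : (X -> Prop) -> (X -> Prop)) : Prop :=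
  closure_op_on (@subset_of X) K.

(** Send [a] to the set of elements not above it, [a ↦ {c | ~ a <= c}]. This
    is an order embedding of [S] into [(P(S), ⊆)] turning joins into unions.
    The images of the closed elements [K_S a] form a family of sets, and the
    closure space on [S] is the one generated by this family: [K A] is the
    intersection of the members of the family containing [A]. Since [K_S a]
    is the least closed element above [a], the least member of the family
    containing the image of [a] is the image of [K_S a]. *)
From HB Require Import structures.
From mathcomp Require Import all_boot all_order.
From Stdlib Require Import Classical FunctionalExtensionality PropExtensionality.
Set Implicit Arguments. Unset Strict Implicit. Unset Printing Implicit Defensive.
Local Open Scope order_scope.
Import Order.TTheory.

Lemma closure_op_on_le (P : Type) (le : P -> P -> Prop) (K : P -> P) :
  closure_op_on le K -> forall a b, le a (K b) -> le (K a) (K b).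
Proof. by case=> _ idem mono a b /mono; rewrite idem. Qed.

Lemma subset_of_antisym (X : Type) (A B : X -> Prop) :
  subset_of A B -> subset_of B A -> A = B.
Proof.
move=> AB BA; apply: functional_extensionality => x.
by apply: propositional_extensionality; split; [apply: AB | apply: BA].
Qed.

Section GeneratedClosure.

Variables (X : Type) (F : (X -> Prop) -> Prop).

Definition generated_closure (A : X -> Prop) : X -> Prop :=
  fun x => forall C, F C -> subset_of A C -> C x.

Lemma generated_closure_op : closure_space_op generated_closure.
Proof.
split.
- by move=> A x Ax C _; apply.
- move=> A; apply: subset_of_antisym => x Kx C FC AC.
  + by apply: Kx => // y; apply.
  + exact: AC.
- by move=> A B AB x KAx C FC BC; apply: KAx => // y /AB /BC.
Qed.

Lemma generated_closure_least (A C0 : X -> Prop) :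
  F C0 -> subset_of A C0 ->
  (forall C, F C -> subset_of A C -> subset_of C0 C) ->
  generated_closure A = C0.
Proof.
move=> FC0 AC0 least; apply: subset_of_antisym => [x Kx | x C0x C FC AC].
- exact: Kx.
- exact: least.
Qed.

End GeneratedClosure.

Section NotAbove.

Variables (d : Order.disp_t) (S : joinSemilatticeType d).

Definition not_above (a : S) : S -> Prop := fun c => ~ a <= c.

Lemma subset_not_above (a b : S) : subset_of (not_above a) (not_above b) <-> a <= b.
Proof.
split=> [ab | ab c nac bc].
- by apply: NNPP => nab; apply: (ab b nab).
- by apply: nac; apply: le_trans ab bc.
Qed.

Lemma not_above_inj : injective not_above.
Proof.
move=> a b eab; apply/eqP; rewrite eq_le.
by apply/andP; split; apply/subset_not_above; rewrite eab.
Qed.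

Lemma not_above_join (a b : S) :
  not_above (a `|` b) = union_of (not_above a) (not_above b).
Proof.
apply: subset_of_antisym => c; rewrite /not_above /union_of leUx.
- move=> nabc; apply: NNPP => /not_or_and [/NNPP ac /NNPP bc].
  by apply: nabc; rewrite ac bc.
- by case=> nc /andP [ac bc].
Qed.

End NotAbove.

Theorem theorem5p1 (d : Order.disp_t) (S : joinSemilatticeType d) (KS : S -> S) :
  closure_op KS ->
  exists (X : Type) (K : (X -> Prop) -> (X -> Prop)) (phi : S -> (X -> Prop)),
    [/\ closure_space_op K,
        injective phi,
        (forall a b : S, phi (a `|` b) = union_of (phi a) (phi b))
      & (forall a : S, phi (KS a) = K (phi a))].
Proof.
move=> KS_closure; have [KS_ext _ _] := KS_closure.
pose closed_images C := exists a, C = not_above (KS a).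
exists S, (generated_closure closed_images), (@not_above d S).
split; [exact: generated_closure_op | exact: not_above_inj | exact: not_above_join |].
move=> a; symmetry; apply: generated_closure_least.
- by exists a.
- exact/subset_not_above/KS_ext.
- move=> _ [b ->] /subset_not_above a_KSb.
  exact/subset_not_above/(closure_op_on_le KS_closure).
Qed.
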